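(* Let $A\in M_n(\mathcal F)$ be strongly nonsingular, i.e. $A^m$ is nonsingular for every $m\in\mathbb N$. Then $A$ has no nonzero degenerate generalized eigenvector: there is no nonzero tangible vector $v\in(\mathcal T\cup\{0_{\mathcal F}\})^n$ such that $A^mv\in(\mathcal G\cup\{0_{\mathcal F}\})^n$ for some $m\in\mathbb N$.
   Context: $\mathcal F=\mathcal T\cup\mathcal G\cup\{0_{\mathcal F}\}$ is the standard supertropical semifield: $\mathcal T$ is an ordered abelian group of tangible elements (written multiplicatively), $\mathcal G$ its ghost copy via $a\mapsto a^\nu$, $0_{\mathcal F}=-\infty$; $a+b$ is the element of larger $\nu$-value if these differ and $a+b=a^\nu$ if $a^\nu=b^\nu$; products multiply $\nu$-values and are tangible iff all factors are. $\det(A)=\sum_{\sigma\in S_n}\prod_ia_{i,\sigma(i)}$, and $A$ is nonsingular if $\det(A)\in\mathcal T$. A tangible vector $v$ is a degenerate generalized eigenvector of $A$ if $A^mv$ is ghost (all coordinates in $\mathcal G\cup\{0_{\mathcal F}\}$) for some $m$. *)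

From mathcomp Require Import all_boot all_order all_algebra all_fingroup.
Set Implicit Arguments. Unset Strict Implicit. Unset Printing Implicit Defensive.

Record ordAbGroup := OrdAbGroup {
  gcar :> eqType;
  gmul : gcar -> gcar -> gcar;
  gone : gcar;
  ginv : gcar -> gcar;
  gle  : rel gcar;
  gmulA : associative gmul;
  gmulC : commutative gmul;
  gmul1 : left_id gone gmul;
  gmulV : forall x, gmul (ginv x) x = gone;
  gle_refl : reflexive gle;
  gle_anti : antisymmetric gle;
  gle_trans : transitive gle;
  gle_total : total gle;
  gle_mul : forall x y z, gle x y -> gle (gmul z x) (gmul z y)
}.

(* Elements of F = T ∪ G ∪ {0_F}: tangible [Tan a], ghost [Gho a] = a^nu,
   and the zero element [Zero] = -oo. *)
Inductive stF (T : ordAbGroup) : Type :=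
| Zero : stF T
| Tan : gcar T -> stF T
| Gho : gcar T -> stF T.
Arguments Zero {T}.

Section Ops.
Variable T : ordAbGroup.

Definition sadd (x y : stF T) : stF T :=
  match x, y with
  | Zero, _ => y
  | _, Zero => x
  | (Tan a | Gho a), (Tan b | Gho b) =>
      if a == b then Gho a
      else if gle a b then y else x
  end.

Definition smul (x y : stF T) : stF T :=
  match x, y with
  | Tan a, Tan b => Tan (gmul a b)
  | Tan a, Gho b | Gho a, Tan b | Gho a, Gho b => Gho (gmul a b)
  | _, _ => Zero
  end.

Definition sone : stF T := Tan (gone T).

Definition is_tangible (x : stF T) : bool := if x is Tan _ then true else false.
Definition is_ghost_or_zero (x : stF T) : bool :=
  match x with Tan _ => false | _ => true end.
Definition is_tangible_or_zero (x : stF T) : bool :=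
  match x with Gho _ => false | _ => true end.

Definition smxmul n (A B : 'M[stF T]_n) : 'M[stF T]_n :=
  \matrix_(i, j) \big[sadd/Zero]_(k < n) smul (A i k) (B k j).

Definition smx1 n : 'M[stF T]_n :=
  \matrix_(i, j) (if i == j then sone else Zero).

Definition smxpow n (A : 'M[stF T]_n) (m : nat) : 'M[stF T]_n :=
  iter m (smxmul A) (smx1 n).

Definition smxvec n (A : 'M[stF T]_n) (v : 'cV[stF T]_n) : 'cV[stF T]_n :=
  \col_i \big[sadd/Zero]_(k < n) smul (A i k) (v k ord0).

Definition sdet n (A : 'M[stF T]_n) : stF T :=
  \big[sadd/Zero]_(s : 'S_n) \big[smul/sone]_(i < n) A i (s i).

Definition snonsingular n (A : 'M[stF T]_n) : bool := is_tangible (sdet A).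

Definition strongly_nonsingular n (A : 'M[stF T]_n) : Prop :=
  forall m : nat, snonsingular (smxpow A m).

Definition tangible_vec n (v : 'cV[stF T]_n) : bool :=
  [forall i, is_tangible_or_zero (v i ord0)].
Definition ghost_vec n (v : 'cV[stF T]_n) : bool :=
  [forall i, is_ghost_or_zero (v i ord0)].
Definition nonzero_vec n (v : 'cV[stF T]_n) : Prop := exists i, v i ord0 <> Zero.

Definition degenerate_gen_eigenvector n (A : 'M[stF T]_n) (v : 'cV[stF T]_n) : Prop :=
  tangible_vec v /\ exists m : nat, ghost_vec (smxvec (smxpow A m) v).
End Ops.

From HB Require Import structures.
From mathcomp Require Import all_boot all_order all_algebra all_fingroup.
Set Implicit Arguments. Unset Strict Implicit. Unset Printing Implicit Defensive.

(* Let B = A^m, let v be tangible and nonzero, and let sg be the permutation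
   whose term in det B is the tangible value of det B, so that every other term
   is strictly smaller.  If B v were ghost, then for every column j with v_j
   tangible, the row i = sg^-1 j of B v would contain a second summand
   B_ik v_k >= B_ij v_j with k <> j and v_k tangible.  Following these choices
   k from some j eventually cycles, and the cycle gives a permutation rho <> 1
   such that in every row the term of tau = sg rho, weighted by v, dominates
   that of sg.  The weights of v cancel from both products, so the term of tau
   in det B is at least that of sg, a contradiction. *)
Section OrderedGroup.
Variable T : ordAbGroup.
Implicit Types a b c d : gcar T.

Lemma gle_mulr a b c : gle a b -> gle (gmul a c) (gmul b c).
Proof. by rewrite ![gmul _ c]gmulC; exact: gle_mul. Qed.

Lemma gle_mul2 a b c d : gle a b -> gle c d -> gle (gmul a c) (gmul b d).
Proof. by move=> hab hcd; apply: gle_trans (gle_mulr c hab) (gle_mul b hcd). Qed.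

Lemma gmulK c : cancel (fun a => gmul a c) (fun a => gmul a (ginv c)).
Proof. by move=> a; rewrite -gmulA (gmulC c) gmulV gmulC gmul1. Qed.

Lemma gle_mul2r a b c : gle (gmul a c) (gmul b c) -> gle a b.
Proof. by move/(gle_mulr (ginv c)); rewrite !gmulK. Qed.

HB.instance Definition _ :=
  Monoid.isComLaw.Build (gcar T) (gone T) (@gmul T) (@gmulA T) (@gmulC T) (@gmul1 T).

Lemma gle_big (I : Type) (r : seq I) (F G : I -> gcar T) :
  (forall i, gle (F i) (G i)) ->
  gle (\big[@gmul T/gone T]_(i <- r) F i) (\big[@gmul T/gone T]_(i <- r) G i).
Proof.
move=> leFG; elim: r => [|i r IHr]; first by rewrite !big_nil gle_refl.
by rewrite !big_cons gle_mul2.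
Qed.

End OrderedGroup.

Section Supertropical.
Variable T : ordAbGroup.
Implicit Types x y z : stF T.

Definition nu_le x y : bool :=
  match x, y with
  | Zero, _ => true
  | _, Zero => false
  | (Tan a | Gho a), (Tan b | Gho b) => gle a b
  end.

Definition nu_lt x y : bool := ~~ nu_le y x.

(* The value [gone] at [Zero] is junk: [nu] is only meaningful off [Zero]. *)
Definition nu x : gcar T := match x with Zero => gone T | Tan a | Gho a => a end.

Lemma nu_le_refl x : nu_le x x.
Proof. by case: x => [|a|a] //=; exact: gle_refl. Qed.

Lemma nu_le_trans y x z : nu_le x y -> nu_le y z -> nu_le x z.
Proof. by case: x => [|a|a]; case: y => [|b|b]; case: z => [|c|c] //=; exact: gle_trans. Qed.

Lemma nu_le_lt_trans y x z : nu_le x y -> nu_lt y z -> nu_lt x z.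
Proof. by move=> lexy; apply: contra => /nu_le_trans; apply. Qed.

Lemma nu_leE x y : x <> Zero -> y <> Zero -> nu_le x y = gle (nu x) (nu y).
Proof. by case: x => // a _; case: y. Qed.

Lemma nu_le_neq0 x y : x <> Zero -> nu_le x y -> y <> Zero.
Proof. by case: x => // a _; case: y. Qed.

Lemma sadd0r x : sadd x Zero = x.
Proof. by case: x. Qed.

Lemma saddC : commutative (@sadd T).
Proof.
move=> x y; case: x => [|a|a]; case: y => [|b|b] //=; rewrite [b == a]eq_sym.
all: case: eqP => [->//|neq_ab].
all: case leab: (gle a b); case leba: (gle b a) => //.
all: first [ by case: neq_ab; apply: gle_anti; rewrite leab leba
           | by move: (gle_total a b); rewrite leab leba ].
Qed.

Lemma nu_le_saddl x y : nu_le x (sadd x y).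
Proof.
case: x => [|a|a]; case: y => [|b|b] //=; rewrite ?gle_refl //.
all: case: eqP => [->|_]; rewrite /= ?gle_refl //.
all: by case: ifP; rewrite /= ?gle_refl.
Qed.

Lemma nu_le_saddr x y : nu_le y (sadd x y).
Proof. by rewrite saddC nu_le_saddl. Qed.

Lemma sadd_nu_le x y : nu_le (sadd x y) x || nu_le (sadd x y) y.
Proof.
case: x => [|a|a]; case: y => [|b|b] //=; rewrite ?gle_refl ?orbT //.
all: case: eqP => [->|_]; rewrite /= ?gle_refl //.
all: by case: ifP; rewrite /= ?gle_refl ?orbT.
Qed.

Lemma sadd_Tan x y a : sadd x y = Tan a ->
  (nu_lt x (Tan a) /\ y = Tan a) \/ (x = Tan a /\ nu_lt y (Tan a)).
Proof.
case: x => [|b|b]; case: y => [|c|c] //=; try by [left | right].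
all: case: eqP => // neq_bc; case: ifP => lebc // [<-]; rewrite /nu_lt /=.
all: first [ left; split=> //; apply/negP => lecb; apply: neq_bc; apply: gle_anti;
             by rewrite lebc lecb
           | right; split=> //; exact/negbT ].
Qed.

Lemma sadd_Tan_ghost a y : is_ghost_or_zero (sadd (Tan a) y) ->
  y <> Zero /\ nu_le (Tan a) y.
Proof.
case: y => [|b|b] //=; case: eqP => [->|_]; rewrite ?gle_refl //.
all: by case: ifP => // leab _; split.
Qed.

Lemma smul_neq0 x y : x <> Zero -> y <> Zero ->
  smul x y <> Zero /\ nu (smul x y) = gmul (nu x) (nu y).
Proof. by case: x => // a _; case: y. Qed.

Lemma smul_eq0 x y : smul x y <> Zero -> x <> Zero /\ y <> Zero.
Proof. by case: x => [|a|a]; case: y. Qed.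

Lemma smul_tangible x y : is_tangible (smul x y) -> is_tangible x /\ is_tangible y.
Proof. by case: x => [|a|a]; case: y. Qed.

Lemma tangible_smul x y : is_tangible x -> is_tangible y -> is_tangible (smul x y).
Proof. by case: x => [|a|a]; case: y. Qed.

Lemma tangible_neq0 x : is_tangible x -> x <> Zero.
Proof. by case: x. Qed.

End Supertropical.

Section BigSum.
Variables (T : ordAbGroup) (I : eqType) (F : I -> stF T).
Local Notation ssum r := (\big[@sadd T/Zero]_(i <- r) F i).

Lemma nu_le_ssum r i : i \in r -> nu_le (F i) (ssum r).
Proof.
elim: r => // j r IHr; rewrite inE big_cons => /orP[/eqP->|/IHr le_i].
  exact: nu_le_saddl.
exact: nu_le_trans le_i (nu_le_saddr _ _).
Qed.

Lemma ssum_le_term r : ssum r <> Zero -> exists2 k, k \in r & nu_le (ssum r) (F k).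
Proof.
elim: r => [|j r IHr]; rewrite ?big_nil // big_cons => sum_neq0.
have [sum_r0 | /IHr[k kr le_k]] : ssum r = Zero \/ ssum r <> Zero.
- by case: (ssum r); [left | right | right].
- by exists j; rewrite ?mem_head // sum_r0 sadd0r nu_le_refl.
have /orP[le_j | le_r] := sadd_nu_le (F j) (ssum r).
  by exists j; rewrite ?mem_head.
by exists k; [rewrite inE kr orbT | exact: nu_le_trans le_r le_k].
Qed.

Lemma ssum_Tan r a : ssum r = Tan a ->
  exists2 i, i \in r & F i = Tan a /\ forall j, j \in r -> j != i -> nu_lt (F j) (Tan a).
Proof.
elim: r => [|j r IHr]; rewrite ?big_nil // big_cons.
case/sadd_Tan => [[lt_j /IHr[i ir [Fi lt_r]]] | [Fj lt_r]].
  exists i; first by rewrite inE ir orbT.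
  by split=> // k; rewrite inE => /orP[/eqP-> | /lt_r].
exists j; first exact: mem_head.
split=> // k; rewrite inE => /orP[/eqP->|kr _]; first by rewrite eqxx.
exact: nu_le_lt_trans (nu_le_ssum kr) lt_r.
Qed.

Lemma ghost_ssum_dominated r i0 c : uniq r -> is_ghost_or_zero (ssum r) ->
    i0 \in r -> F i0 = Tan c ->
  exists2 k, k \in r & (k != i0) && nu_le (Tan c) (F k).
Proof.
elim: r => [|j r IHr] //= /andP[jNr uniq_r]; rewrite big_cons inE.
have IHr' : is_ghost_or_zero (ssum r) -> i0 \in r -> F i0 = Tan c ->
    exists2 k, k \in j :: r & (k != i0) && nu_le (Tan c) (F k).
  by move=> ghost_r i0r Fi0; have [k kr] := IHr uniq_r ghost_r i0r Fi0;
    exists k; rewrite ?inE ?kr ?orbT.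
case: (eqVneq i0 j) => [-> | neq_i0j] /= ghost_sum i0r Fi0.
  rewrite Fi0 in ghost_sum; have [sum_neq0 le_c] := sadd_Tan_ghost ghost_sum.
  have [k kr le_k] := ssum_le_term sum_neq0.
  exists k; first by rewrite inE kr orbT.
  apply/andP; split; last exact: nu_le_trans le_c le_k.
  by apply: contraNneq jNr => <-.
case sum_r: (ssum r) ghost_sum => [|d|d] ghost_sum; try by apply: IHr'; rewrite ?sum_r.
have le_cd : nu_le (Tan c) (Tan d) by rewrite -sum_r -Fi0 nu_le_ssum.
rewrite saddC in ghost_sum; have [_ le_dj] := sadd_Tan_ghost ghost_sum.
exists j; first exact: mem_head.
by rewrite eq_sym neq_i0j; exact: nu_le_trans le_cd le_dj.
Qed.

End BigSum.

Section BigProd.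
Variables (T : ordAbGroup) (I : eqType) (G : I -> stF T).
Local Notation sprod r := (\big[@smul T/sone T]_(i <- r) G i).

Lemma sprod_tangible r : is_tangible (sprod r) -> forall i, i \in r -> is_tangible (G i).
Proof.
elim: r => // j r IHr; rewrite big_cons => /smul_tangible[Gj_tan prod_tan] i.
by rewrite inE => /orP[/eqP-> // | /(IHr prod_tan)].
Qed.

Lemma sprod_neq0 r : (forall i, i \in r -> G i <> Zero) ->
  sprod r <> Zero /\ nu (sprod r) = \big[@gmul T/gone T]_(i <- r) nu (G i).
Proof.
elim: r => [|j r IHr] G_neq0; first by rewrite !big_nil.
have [prod_neq0 nu_prod] : sprod r <> Zero /\
    nu (sprod r) = \big[@gmul T/gone T]_(i <- r) nu (G i).
  by apply: IHr => i ir; apply: G_neq0; rewrite inE ir orbT.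
have [smul_neq0 nu_smul] := smul_neq0 (G_neq0 j (mem_head j r)) prod_neq0.
by rewrite !big_cons nu_smul nu_prod.
Qed.

End BigProd.

Section PermutationAlongMap.
Variables (I : finType) (S : {pred I}) (f : I -> I).
Hypotheses (f_stable : {homo f : j / j \in S}) (f_moves : forall j, j \in S -> f j != j).

(* Bounding the period by #|I| keeps recurrence a boolean test. *)
Let recurrent j := (j \in S) && [exists k : 'I_#|I|.+1, (0 < k) && (iter k f j == j)].

Lemma recurrentP j : recurrent j -> exists2 k, 0 < k & iter k f j = j.
Proof. by case/andP=> _ /existsP[k /andP[k_gt0 /eqP fix_k]]; exists k. Qed.

Lemma recurrent_f j : recurrent j -> recurrent (f j).
Proof.
case/andP=> jS /existsP[k /andP[k_gt0 /eqP fix_k]]; rewrite /recurrent f_stable //.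
by apply/existsP; exists k; rewrite k_gt0 -iterSr iterS fix_k eqxx.
Qed.

Lemma recurrent_inj : {in recurrent &, injective f}.
Proof.
move=> a b /recurrentP[Ka Ka_gt0 fix_a] /recurrentP[Kb Kb_gt0 fix_b] fab.
have KaKb_gt0 : 0 < Ka * Kb by rewrite muln_gt0 Ka_gt0 Kb_gt0.
have <- : iter (Ka * Kb) f a = a by rewrite mulnC iterM iter_fix.
have <- : iter (Ka * Kb) f b = b by rewrite iterM iter_fix.
by rewrite -(prednK KaKb_gt0) !iterSr fab.
Qed.

Lemma exists_recurrent j0 : j0 \in S -> exists j, recurrent j.
Proof.
move=> j0S; pose g (k : 'I_#|I|.+1) := iter k f j0.
have gS k : iter k f j0 \in S by apply: iter_in.
have /injectivePn[p [q neq_pq gpq]] : ~~ injectiveb g.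
  by apply/injectiveP => /leq_card; rewrite card_ord ltnn.
wlog lt_pq : p q neq_pq gpq / p < q.
  move=> W; case: (ltngtP p q) => [|lt_qp|/val_inj eq_pq]; first exact: W.
  - by apply: (W q p); rewrite // eq_sym.
  - by rewrite eq_pq eqxx in neq_pq.
have lt_qp_bound : q - p < #|I|.+1 := leq_ltn_trans (leq_subr p q) (ltn_ord q).
exists (g p); rewrite /recurrent gS; apply/existsP; exists (Ordinal lt_qp_bound).
rewrite /= subn_gt0 lt_pq /=; apply/eqP.
by rewrite /g -iterD subnK ?(ltnW lt_pq) //; exact: esym gpq.
Qed.

Let rho_fun j := if recurrent j then f j else j.

Lemma rho_fun_inj : injective rho_fun.
Proof.
move=> a b; rewrite /rho_fun.
case rec_a: (recurrent a); case rec_b: (recurrent b) => // fab.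
- exact: recurrent_inj.
- by move: (recurrent_f rec_a); rewrite fab rec_b.
- by move: (recurrent_f rec_b); rewrite -fab rec_a.
Qed.

Lemma exists_perm_along j0 : j0 \in S ->
  exists2 rho : {perm I}, rho != 1%g & forall j, rho j != j -> (j \in S) /\ rho j = f j.
Proof.
move=> /exists_recurrent[r rec_r]; exists (perm rho_fun_inj).
  apply/eqP => /permP/(_ r); rewrite perm1 permE /rho_fun rec_r; apply/eqP.
  by apply: f_moves; case/andP: rec_r.
move=> j; rewrite permE /rho_fun; case: ifP; last by rewrite eqxx.
by case/andP.
Qed.

End PermutationAlongMap.

Lemma exists_perm_in_rel (I : finType) (S : {pred I}) (E : rel I) j0 : j0 \in S ->
    (forall j, j \in S -> exists2 k, k \in S & (k != j) && E j k) ->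
  exists2 rho : {perm I}, rho != 1%g & forall j, rho j != j -> j \in S /\ E j (rho j).
Proof.
move=> j0S succ_E.
have [f fP] : exists f : I -> I, forall j, j \in S -> [&& f j \in S, f j != j & E j (f j)].
  apply: (fin_all_exists (P := fun j k => j \in S -> [&& k \in S, k != j & E j k])) => j.
  case: (boolP (j \in S)) => [/succ_E[k kS /andP[neq_kj Ejk]] | jNS]; last by exists j.
  by exists k; rewrite kS neq_kj.
have f_stable : {homo f : j / j \in S} by move=> j /fP/and3P[].
have f_moves j : j \in S -> f j != j by move/fP/and3P=> [].
have [rho rho_neq1 rhoP] := exists_perm_along f_stable f_moves j0S.
exists rho => // j /rhoP[jS ->]; split=> //.
by case/and3P: (fP j jS).
Qed.

Section Matrices.
Variables (T : ordAbGroup) (n : nat).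
Implicit Types (B : 'M[stF T]_n) (v : 'cV[stF T]_n) (sg tau : 'S_n).

Definition sdet_term B sg : stF T := \big[@smul T/sone T]_(i < n) B i (sg i).

Lemma nonsingular_dominant_perm B : snonsingular B ->
  exists sg, (forall i, is_tangible (B i (sg i))) /\
             forall tau, tau != sg -> nu_lt (sdet_term B tau) (sdet_term B sg).
Proof.
rewrite /snonsingular /sdet; case det_B: (\big[_/_]_s _) => [|a|a] // _.
have [sg _ [term_sg dom_sg]] := ssum_Tan det_B.
exists sg; split; rewrite /sdet_term ?term_sg.
- move=> i; apply: (sprod_tangible (G := fun i => B i (sg i)) (r := index_enum _)).
    by rewrite term_sg.
  exact: mem_index_enum.
- by move=> tau; apply: dom_sg; rewrite mem_index_enum.
Qed.

Lemma ghost_row_dominated B v i j : ghost_vec (smxvec B v) ->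
    is_tangible (B i j) -> is_tangible (v j ord0) ->
  exists2 k, k != j & nu_le (smul (B i j) (v j ord0)) (smul (B i k) (v k ord0)).
Proof.
move=> /forallP/(_ i); rewrite mxE => ghost_row.
case Bij: (B i j) => [|b|b] //; case vj: (v j ord0) => [|c|c] // _ _.
have [|k _ /andP[neq_kj le_k]] := ghost_ssum_dominated (index_enum_uniq _) ghost_row
  (mem_index_enum j) (_ : _ = Tan (gmul b c)); first by rewrite Bij vj.
by exists k.
Qed.

Lemma nu_le_sdet_term B (u : 'I_n -> gcar T) sg tau :
    (forall i, B i (sg i) <> Zero) -> (forall i, B i (tau i) <> Zero) ->
    (forall i, gle (gmul (nu (B i (sg i))) (u (sg i))) (gmul (nu (B i (tau i))) (u (tau i)))) ->
  nu_le (sdet_term B sg) (sdet_term B tau).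
Proof.
move=> sg_neq0 tau_neq0 /(gle_big (index_enum 'I_n)).
have reindex (s : 'S_n) : \big[@gmul T/gone T]_(i < n) u (s i) = \big[@gmul T/gone T]_(i < n) u i.
  by rewrite [RHS](reindex_inj (@perm_inj _ s)).
rewrite !big_split /= !reindex => /gle_mul2r.
have [term_sg_neq0 nu_sg] := sprod_neq0 (r := index_enum _) (fun i _ => sg_neq0 i).
have [term_tau_neq0 nu_tau] := sprod_neq0 (r := index_enum _) (fun i _ => tau_neq0 i).
by rewrite /sdet_term nu_leE // nu_sg nu_tau.
Qed.

End Matrices.

Lemma nonsingular_mxvec_not_ghost (T : ordAbGroup) n (B : 'M[stF T]_n) (v : 'cV[stF T]_n) :
  snonsingular B -> tangible_vec v -> nonzero_vec v -> ~~ ghost_vec (smxvec B v).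
Proof.
move=> /nonsingular_dominant_perm[sg [sg_tan sg_dom]] tan_v [j0 vj0_neq0].
apply/negP => ghost_Bv.
pose w j := v j ord0.
pose row j := (sg^-1)%g j.
pose S := [pred j | is_tangible (w j)].
pose E := [rel j k | nu_le (smul (B (row j) j) (w j)) (smul (B (row j) k) (w k))].
have w_tan j : w j <> Zero -> j \in S.
  by move: (forallP tan_v j); rewrite inE /w; case: (v j ord0).
have succ_E j : j \in S -> exists2 k, k \in S & (k != j) && E j k.
  move=> jS; have Btan : is_tangible (B (row j) j).
    by rewrite -{2}(permKV sg j); exact: sg_tan.
  have [k neq_kj le_k] := ghost_row_dominated ghost_Bv Btan jS.
  exists k; last by rewrite neq_kj.
  apply: w_tan; apply: (smul_eq0 (nu_le_neq0 _ le_k)).2.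
  exact/tangible_neq0/tangible_smul.
have [rho rho_neq1 rhoE] := exists_perm_in_rel (w_tan j0 vj0_neq0) succ_E.
pose tau := (sg * rho)%g.
have tau_neq_sg : tau != sg.
  by apply: contraNneq rho_neq1 => eq_tau; rewrite -(mulKg sg rho) -/tau eq_tau mulVg.
have row_le i : B i (tau i) <> Zero /\
    gle (gmul (nu (B i (sg i))) (nu (w (sg i)))) (gmul (nu (B i (tau i))) (nu (w (tau i)))).
  rewrite permM; have [fix_j | /rhoE[jS]] := eqVneq (rho (sg i)) (sg i).
    by rewrite fix_j; split; [exact: tangible_neq0 | exact: gle_refl].
  rewrite /= /row permK => le_rho.
  have sg_neq0 := tangible_neq0 (tangible_smul (sg_tan i) jS).
  have [B_neq0 w_neq0] := smul_eq0 (nu_le_neq0 sg_neq0 le_rho).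
  have [_ nu_sg] := smul_neq0 (tangible_neq0 (sg_tan i)) (tangible_neq0 jS).
  have [rho_neq0 nu_rho] := smul_neq0 B_neq0 w_neq0.
  by split=> //; rewrite -nu_sg -nu_rho -nu_leE.
have := nu_le_sdet_term (u := fun j => nu (w j)) (fun i => tangible_neq0 (sg_tan i))
  (fun i => (row_le i).1) (fun i => (row_le i).2).
exact/negP/sg_dom.
Qed.

Theorem lemma3p13 (T : ordAbGroup) (n : nat) (A : 'M[stF T]_n) :
  strongly_nonsingular A ->
  ~ (exists v : 'cV[stF T]_n, nonzero_vec v /\ degenerate_gen_eigenvector A v).
Proof.
move=> nonsing_A [v [v_neq0 [tan_v [m ghost_Amv]]]].
by have /negP := nonsingular_mxvec_not_ghost (nonsing_A m) tan_v v_neq0.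
Qed.
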